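(* Let $\mathcal D=U(-1,1)$ and, for $m\ge 1$, let $\mathcal D_m$ denote the distribution of the sum of $m$ i.i.d. samples from $\mathcal D$. Let $k\ge 2$ and let $Z_2,\dots,Z_k$ be independent random variables with $Z_i\sim\mathcal D_{m(i)}$ for positive integers $m(i)$, and let $X\sim\mathcal D$ be independent of them. Then $$\mathbb P\big(0\ge \max(Z_2,\dots,Z_k)\big)\le \mathbb P\big(X\ge\max(Z_2,\dots,Z_k)\big).$$ *)

From HB Require Import structures.
From mathcomp Require Import all_boot all_order all_algebra.
From mathcomp Require Import all_classical all_reals all_analysis.
Set Implicit Arguments. Unset Strict Implicit. Unset Printing Implicit Defensive.
Import Order.TTheory GRing.Theory Num.Theory.
Local Open Scope classical_set_scope.
Local Open Scope ring_scope.

Lemma m1_lt_1 (R : realType) : (-1 : R) < 1.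
Proof. by rewrite (@lt_trans _ _ 0) ?ltrN10 ?ltr01. Qed.

Definition unifD (R : realType) := uniform_prob (m1_lt_1 R).

(* Iterated convolution: Dsum_aux m A s = P(s + U_1 + ... + U_m \in A)
   for U_1, ..., U_m i.i.d. ~ D (computed by iterated integration). *)
Fixpoint Dsum_aux (R : realType) (m : nat) (A : set R) (s : R) : \bar R :=
  match m with
  | 0 => (\1_A s)%:E
  | m'.+1 => (\int[@unifD R]_x @Dsum_aux R m' A (s + x))%E
  end.

Definition Dsum (R : realType) (m : nat) (A : set R) : \bar R := Dsum_aux m A 0.

Definition has_law d (T : measurableType d) (R : realType) (P : probability T R)
  (Y : T -> R) (mu : set R -> \bar R) : Prop :=
  forall A : set R, measurable A -> P (Y @^-1` A) = mu A.

Definition mutually_independent d (T : measurableType d) (R : realType)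
  (P : probability T R) (I : seq nat) (Y : nat -> T -> R) : Prop :=
  forall B : nat -> set R, (forall i, measurable (B i)) ->
    P (\bigcap_(i in [set` I]) (Y i @^-1` B i)) = (\prod_(i <- I) P (Y i @^-1` B i))%E.

(* Let F(c) = prod_i P(Z_i <= c), which by independence is P(max_i Z_i <= c).
   A sum of uniforms on [-1, 1] is symmetric and has no atoms, so
   P(Z_i <= 0) = 1/2 and P(Z_i <= t) + P(Z_i <= -t) >= 1; induction on the
   number of factors then gives F(t) + F(-t) >= 2 F(0) for t >= 0.  As X is
   uniform on [-1, 1] and independent of the Z_i,
   P(X >= max Z) = 1/2 int_{-1}^{1} F = 1/2 int_0^1 (F(t) + F(-t)) dt >= F(0).
   The integral is only bounded from below, by Riemann sums: with
   delta = 1/(N+1) and t = (j+1) delta for j < N, the disjoint events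
   {X in [t, t + delta), max Z <= t} and {X in [-t, -t + delta), max Z <= -t}
   lie in {X >= max Z} and have total probability at least N/(N+1) F(0). *)

From HB Require Import structures.
From mathcomp Require Import all_boot all_order all_algebra.
From mathcomp Require Import all_classical all_reals all_analysis.
From mathcomp Require Import measurable_realfun.
From mathcomp Require Import ring lra zify.
Set Implicit Arguments. Unset Strict Implicit. Unset Printing Implicit Defensive.
Import Order.TTheory GRing.Theory Num.Theory.
Local Open Scope classical_set_scope.
Local Open Scope ring_scope.

Section uniform_reflection.
Variable R : realType.
Local Open Scope ereal_scope.

Lemma measurable_oppr_preimage (A : set R) :
  measurable A -> measurable (-%R @^-1` A : set R).
Proof. by move=> mA; have := oppr_measurable measurableT mA; rewrite setTI. Qed.

Lemma integral_unifD_reflect (f : R -> \bar R) :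
  measurable_fun [set: R] f -> (forall x, 0 <= f x) ->
  \int[@unifD R]_x f (- x)%R = \int[@unifD R]_x f x.
Proof.
move=> mf f0; rewrite /unifD integral_uniform//; last first.
  by apply: measurableT_comp => //; exact: oppr_measurable.
rewrite integral_uniform//; congr (_ * _).
have oppK : (-%R : R -> measurableTypeR R) @^-1` `[(-1)%R, 1%R] = `[(-1)%R, 1%R]%classic.
  by apply/seteqP; split => x /=; rewrite !in_itv/= => /andP[? ?]; apply/andP; split; lra.
rewrite -[in LHS]oppK -ge0_integral_pushforward//=; last exact: measurable_funS mf.
by apply: eq_measure_integral => A mA _; exact: lebesgue_measureN.
Qed.

Lemma unifD_set1 (c : R) : @unifD R [set c] = 0.
Proof. exact: integral_set1. Qed.

End uniform_reflection.

Section sum_of_uniforms.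
Variable R : realType.
Local Open Scope ereal_scope.
Implicit Types (A : set R) (s : R).

Lemma Dsum_aux_ge0 m A s : 0 <= Dsum_aux m A s.
Proof.
elim: m s => [|m IH] s /=; first by rewrite lee_fin indicE; case: (_ \in _).
exact: integral_ge0.
Qed.

Lemma measurable_Dsum_aux m A : measurable A -> measurable_fun [set: R] (Dsum_aux m A).
Proof.
move=> mA; elim: m => [|m IH] /=.
  by apply/measurable_EFinP; exact: measurable_indic.
apply: (@measurable_fun_fubini_tonelli_F _ _ _ _ R (@unifD R)
  (fun p : R * R => Dsum_aux m A (p.1 + p.2))).
  by apply: measurableT_comp => //; exact: measurable_funD.
by move=> ?; exact: Dsum_aux_ge0.
Qed.

Lemma Dsum_aux_set1 m (c s : R) : Dsum_aux m.+1 [set c] s = 0.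
Proof.
elim: m s => [|m IH] s /=; last first.
  by rewrite (eq_integral (cst 0)) ?integral0// => x _; exact: IH.
transitivity (\int[@unifD R]_x (\1_[set (c - s)%R] x)%:E).
  apply: eq_integral => x _; rewrite !indicE.
  suff -> : ((s + x)%R \in [set c]) = (x \in [set (c - s)%R]) by [].
  by apply/idP/idP => /set_mem /= H; apply/mem_set => /=; [rewrite -H | rewrite H]; ring.
by rewrite integral_indic//= setIT; exact: unifD_set1.
Qed.

Lemma Dsum_aux_reflect m A s : measurable A ->
  Dsum_aux m A s = Dsum_aux m (-%R @^-1` A) (- s)%R.
Proof.
move=> mA; elim: m s => [|m IH] s /=.
  rewrite !indicE; suff -> : ((- s)%R \in -%R @^-1` A) = (s \in A) by [].
  by apply/idP/idP => /set_mem H; apply/mem_set; rewrite /= ?opprK in H *.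
rewrite -(@integral_unifD_reflect _ (fun y => Dsum_aux m (-%R @^-1` A) (- s + y)%R)).
- by apply: eq_integral => x _; rewrite IH opprD.
- apply: measurableT_comp; last exact: measurable_funD.
  by apply: measurable_Dsum_aux; exact: measurable_oppr_preimage.
- by move=> ?; exact: Dsum_aux_ge0.
Qed.

Lemma Dsum_reflect m A : measurable A -> Dsum m A = Dsum m (-%R @^-1` A).
Proof. by move=> mA; rewrite /Dsum (Dsum_aux_reflect _ _ mA) oppr0. Qed.

Lemma Dsum_set1 m (c : R) : (0 < m)%N -> Dsum m [set c] = 0.
Proof. by case: m => // m _; exact: Dsum_aux_set1. Qed.

End sum_of_uniforms.

Lemma prod_add_prod_ge (R : realFieldType) (I : eqType) (s : seq I) (a b : I -> R) :
  (forall i, i \in s -> [/\ 2^-1 <= a i, 0 <= b i, b i <= 2^-1 & 1 <= a i + b i]) ->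
  2 * 2^-1 ^+ size s <= \prod_(i <- s) a i + \prod_(i <- s) b i.
Proof.
move=> hab; suff [] : [/\ 2 * 2^-1 ^+ size s <= \prod_(i <- s) a i + \prod_(i <- s) b i,
  \prod_(i <- s) b i <= \prod_(i <- s) a i & 0 <= \prod_(i <- s) b i] by [].
elim: s hab => [|x s IH] hab; first by rewrite !big_nil expr0; split; lra.
case: IH => [i si|IH1 IH2 IH3]; first by apply: hab; rewrite in_cons si orbT.
have [ax bx0 bx1 abx] := hab x (mem_head _ _).
rewrite !big_cons exprS.
move: (\prod_(i <- s) a i) (\prod_(i <- s) b i) IH1 IH2 IH3 => pa pb IH1 IH2 IH3.
have half_le : 2^-1 * (pa + pb) <= a x * pa + b x * pb.
  rewrite -subr_ge0 (_ : _ - _ = (a x - 2^-1) * (pa - pb) + (a x + b x - 1) * pb);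
    last by field.
  by apply: addr_ge0; apply: mulr_ge0; lra.
by split; [lra | apply: ler_pM; lra | exact: mulr_ge0].
Qed.

Section symmetric_atomless_law.
Context {d} {T : measurableType d} {R : realType} (P : probability T R).
Variable Y : T -> R.

Definition rcdf (c : R) : R := fine (P (Y @^-1` `]-oo, c])).

Lemma probability_fineK (A : set T) : measurable A -> (fine (P A))%:E = P A.
Proof. by move=> mA; rewrite fineK ?fin_num_measure. Qed.

Hypothesis mY : measurable_fun [set: T] Y.

Lemma measurable_preimage (A : set R) : measurable A -> measurable (Y @^-1` A).
Proof. by move=> mA; rewrite -[_ @^-1` _]setTI; exact: mY. Qed.

Lemma rcdfE c : (rcdf c)%:E = P (Y @^-1` `]-oo, c]).
Proof. exact/probability_fineK/measurable_preimage. Qed.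

Lemma rcdf_ge0 c : 0 <= rcdf c.
Proof. by rewrite -lee_fin rcdfE. Qed.

Lemma rcdf_le c c' : c <= c' -> rcdf c <= rcdf c'.
Proof.
move=> cc'; rewrite -lee_fin !rcdfE; apply: le_measure; rewrite ?inE;
  try exact: measurable_preimage.
by move=> t /=; rewrite !in_itv /= => /le_trans; apply.
Qed.

Lemma probability_preimage_itvoy c : P (Y @^-1` `]c, +oo[) = (1 - (rcdf c)%:E)%E.
Proof.
rewrite rcdfE -probability_setC; last exact: measurable_preimage.
by rewrite preimage_setC setCitvl.
Qed.

Hypothesis Ysym : forall A, measurable A -> P (Y @^-1` A) = P (Y @^-1` (-%R @^-1` A)).

Lemma rcdf_addN_ge1 c : 1 <= rcdf c + rcdf (- c).
Proof.
have : (P (Y @^-1` `]c, +oo[) <= (rcdf (- c))%:E)%E.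
  rewrite rcdfE Ysym // opp_preimage_itvbndy /=.
  apply: le_measure; rewrite ?inE; try exact: measurable_preimage.
  by move=> t /=; rewrite !in_itv /=; exact: ltW.
by rewrite probability_preimage_itvoy -EFinB lee_fin; lra.
Qed.

Hypothesis Yatomless : forall c, P (Y @^-1` [set c]) = 0%E.

Lemma rcdf0 : rcdf 0 = 2^-1.
Proof.
have split0 : P (Y @^-1` `]-oo, 0]) = P (Y @^-1` `]-oo, 0[) + P (Y @^-1` [set 0]).
  rewrite -measureU; try exact: measurable_preimage.
    by rewrite -preimage_setU setUitv1.
  rewrite -preimage_setI (_ : _ `&` _ = set0) ?preimage_set0 //.
  by apply/seteqP; split => x //= [/[swap] ->]; rewrite in_itv /= ltxx.
have : (rcdf 0)%:E = P (Y @^-1` `]0, +oo[).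
  by rewrite rcdfE split0 Yatomless adde0 [RHS]Ysym // opp_preimage_itvbndy /= oppr0.
by rewrite probability_preimage_itvoy -EFinB => -[]; lra.
Qed.

End symmetric_atomless_law.

Lemma ler_of_approx (R : archiRealFieldType) (x y : R) :
  0 <= x -> (forall n, x - x / n.+1%:R <= y) -> x <= y.
Proof.
move=> x0 approx; apply/ler_addgt0Pr => e e0.
have /archi_boundP : 0 <= x / e by rewrite divr_ge0 // ltW.
move: (Num.bound _) => n xe_lt_n.
have err_le : x / n.+1%:R <= e.
  rewrite ler_pdivrMr ?ltr0Sn // mulrC -ler_pdivrMr //.
  by rewrite (le_trans (ltW xe_lt_n)) // ler_nat.
by apply: le_trans (lerD (approx n) err_le); rewrite subrK.
Qed.

(* Integer indices let a single injectivity lemma separate the cells on both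
   sides of 0. *)
Definition cell (R : numDomainType) (delta : R) (c : int) : set R :=
  `[c%:~R * delta, (c + 1)%:~R * delta[.

Lemma cell_inj (R : numDomainType) (delta x : R) (a b : int) :
  0 < delta -> cell delta a x -> cell delta b x -> a = b.
Proof.
move=> delta_gt0; rewrite /cell /= !in_itv /= => /andP[ax xa] /andP[bx xb].
have cell_le u v : u%:~R * delta < (v + 1)%:~R * delta -> u <= v.
  by rewrite ltr_pM2r // ltr_int ltzD1.
by apply/eqP; rewrite eq_le !cell_le //; [exact: le_lt_trans bx xa | exact: le_lt_trans ax xb].
Qed.

Lemma grid_point_bound (R : realFieldType) (N : nat) (c : int) :
  - N.+1%:Z <= c <= N.+1%:Z -> -1 <= (c%:~R / N.+1%:R : R) <= 1.
Proof.
rewrite -!(ler_int R) mulrNz pmulrn => /andP[lo hi].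
by rewrite ler_pdivlMr ?ler_pdivrMr ?ltr0Sn // mulN1r mul1r lo hi.
Qed.

Section comparison_with_max.
Context d (T : measurableType d) (R : realType) (P : probability T R).
Variables (k : nat) (m : nat -> nat) (Z : nat -> T -> R) (X : T -> R).
Hypothesis k_ge2 : (2 <= k)%N.
Hypothesis m_gt0 : forall i, (2 <= i <= k)%N -> (0 < m i)%N.
Hypothesis mX : measurable_fun setT X.
Hypothesis mZ : forall i, (2 <= i <= k)%N -> measurable_fun setT (Z i).
Hypothesis lawX : has_law P X (@unifD R).
Hypothesis lawZ : forall i, (2 <= i <= k)%N -> has_law P (Z i) (@Dsum R (m i)).
Hypothesis indep :
  mutually_independent P (iota 1 k) (fun i => if i == 1%N then X else Z i).

Lemma mem_iota2 i : (i \in iota 2 k.-1) = (2 <= i <= k)%N.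
Proof. by rewrite mem_iota add2n ltnS prednK // (leq_trans _ k_ge2). Qed.

Definition maxZ_le (c : R) := [set t | forall i, (2 <= i <= k)%N -> Z i t <= c].

Definition cdf_max (c : R) := \prod_(i <- iota 2 k.-1) rcdf P (Z i) c.

Lemma probability_X_maxZ_le (I : set R) c : measurable I ->
  P (X @^-1` I `&` maxZ_le c) = (P (X @^-1` I) * (cdf_max c)%:E)%E.
Proof.
move=> mI; pose B i := if i == 1%N then I else `]-oo, c]%classic.
have mB i : measurable (B i) by rewrite /B; case: ifP.
have -> : X @^-1` I `&` maxZ_le c = \bigcap_(i in [set` iota 1 k])
    ((if i == 1%N then X else Z i) @^-1` B i).
  apply/seteqP; split => t /=.
  - move=> [XI Zc] i; rewrite /= mem_iota /B.
    by case: eqP => [-> //|i1 hi]; rewrite /= in_itv /=; apply: Zc; lia.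
  - move=> H; split; first by have := H 1%N; rewrite /= mem_iota; apply; lia.
    move=> i hi; have i1 : i != 1%N by apply/eqP; lia.
    have := H i; rewrite /= mem_iota /B (negbTE i1) /=.
    by apply; lia.
rewrite indep // (_ : iota 1 k = 1%N :: iota 2 k.-1); last by case: k k_ge2 => [|[]].
rewrite big_cons /B eqxx; congr (_ * _)%E.
rewrite /cdf_max -prodEFin; apply: eq_big_seq => i; rewrite mem_iota2 => hi.
have i1 : i != 1%N by apply/eqP; lia.
by rewrite !(negbTE i1) rcdfE //; exact: mZ.
Qed.

Lemma Z_reflect i : (2 <= i <= k)%N -> forall A, measurable A ->
  P (Z i @^-1` A) = P (Z i @^-1` (-%R @^-1` A)).
Proof.
move=> hi A mA; have mNA := measurable_oppr_preimage mA.
by rewrite !(lawZ hi) // Dsum_reflect.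
Qed.

Lemma Z_atomless i : (2 <= i <= k)%N -> forall c, P (Z i @^-1` [set c]) = 0%E.
Proof. by move=> hi c; rewrite (lawZ hi) ?Dsum_set1 ?m_gt0. Qed.

Lemma rcdfZ0 i : (2 <= i <= k)%N -> rcdf P (Z i) 0 = 2^-1.
Proof.
by move=> hi; apply: rcdf0; [exact: mZ | exact: Z_reflect | exact: Z_atomless].
Qed.

Lemma cdf_max_ge0 c : 0 <= cdf_max c.
Proof.
rewrite /cdf_max big_seq; apply: prodr_ge0 => i; rewrite mem_iota2 => hi.
exact/rcdf_ge0/mZ.
Qed.

Lemma cdf_max0 : cdf_max 0 = 2^-1 ^+ k.-1.
Proof.
rewrite /cdf_max (eq_big_seq (fun=> 2^-1)) => [|i]; last first.
  by rewrite mem_iota2; exact: rcdfZ0.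
by rewrite big_const_seq count_predT size_iota iter_mulr_1.
Qed.

Lemma cdf_max_addN t : 0 <= t -> 2 * cdf_max 0 <= cdf_max t + cdf_max (- t).
Proof.
move=> t0; rewrite cdf_max0 -(size_iota 2 k.-1); apply: prod_add_prod_ge => i.
rewrite mem_iota2 => hi; rewrite -(rcdfZ0 hi).
have mon := rcdf_le P (mZ hi).
split; [exact: mon | exact: (rcdf_ge0 P (mZ hi)) | apply: mon; lra |].
exact: (rcdf_addN_ge1 (mZ hi) (Z_reflect hi)).
Qed.

Lemma probability_X_itv a b : -1 <= a -> a <= b -> b <= 1 ->
  P (X @^-1` `[a, b[) = ((b - a) / 2)%:E.
Proof.
move=> a_ge ab b_le; rewrite lawX // /unifD /uniform_prob.
rewrite (eq_integral (fun=> (2^-1 : R)%:E)); last first.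
  move=> x; rewrite inE /= in_itv /= => /andP[ax xb].
  by rewrite /uniform_pdf ifT ?opprK //; apply/andP; split; lra.
rewrite integral_cst //= lebesgue_measure_itv /= lte_fin.
case: ltgtP ab => // [a_lt_b|<-] _; last by rewrite mule0 subrr mul0r.
by rewrite -EFinD -EFinM mulrC.
Qed.

Definition X_ge_maxZ := [set t | forall i, (2 <= i <= k)%N -> Z i t <= X t].

Definition lower_event (delta : R) (c : int) :=
  X @^-1` cell delta c `&` maxZ_le (c%:~R * delta).

Lemma measurable_maxZ_le c : measurable (maxZ_le c).
Proof.
rewrite (_ : maxZ_le c = \bigcap_(i in [set i | (2 <= i <= k)%N]) (Z i @^-1` `]-oo, c])).
  by apply: bigcap_measurableType => i hi; exact: measurable_preimage (mZ hi) _ _.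
by apply/seteqP; split => t /= H i hi; have := H i hi; rewrite /= in_itv.
Qed.

Lemma measurable_lower_event delta c : measurable (lower_event delta c).
Proof.
apply: measurableI; last exact: measurable_maxZ_le.
exact: measurable_preimage mX _ (measurable_itv _).
Qed.

Lemma lower_event_sub delta c : lower_event delta c `<=` X_ge_maxZ.
Proof.
move=> t [/= Xt Zt] i hi; apply: le_trans (Zt i hi) _.
by move: Xt; rewrite /cell /= in_itv /= => /andP[].
Qed.

Lemma probability_lower_event delta c : 0 <= delta ->
  -1 <= c%:~R * delta -> (c + 1)%:~R * delta <= 1 ->
  P (lower_event delta c) = (delta / 2 * cdf_max (c%:~R * delta))%:E.
Proof.
move=> delta_ge0 c_ge c_le; rewrite probability_X_maxZ_le; last exact: measurable_itv.
rewrite (@probability_X_itv (c%:~R * delta) ((c + 1)%:~R * delta)) //.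
  by rewrite -EFinM intrD; congr (_%:E); ring.
by rewrite ler_wpM2r // ler_int lerDl.
Qed.

Definition slab (N j : nat) :=
  lower_event N.+1%:R^-1 j.+1 `|` lower_event N.+1%:R^-1 (- j.+1%:Z).

Lemma measurable_slab N j : measurable (slab N j).
Proof. exact: measurableU (measurable_lower_event _ _) (measurable_lower_event _ _). Qed.

Lemma slab_sub N j : slab N j `<=` X_ge_maxZ.
Proof. by move=> t [] /lower_event_sub. Qed.

Lemma slab_inj N i j t : slab N i t -> slab N j t -> i = j.
Proof.
have delta_gt0 : 0 < N.+1%:R^-1 :> R by rewrite invr_gt0 ltr0Sn.
have cellP c (E : lower_event N.+1%:R^-1 c t) := E.1.
by move=> [] /cellP Ci [] /cellP Cj; have := cell_inj delta_gt0 Ci Cj; lia.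
Qed.

Lemma probability_slab N j : (j < N)%N ->
  P (slab N j) = (N.+1%:R^-1 / 2 * (cdf_max (j.+1%:R / N.+1%:R) +
                                    cdf_max (- (j.+1%:R / N.+1%:R))))%:E.
Proof.
move=> jN; have delta_gt0 : 0 < N.+1%:R^-1 :> R by rewrite invr_gt0 ltr0Sn.
have grid c : - N.+1%:Z <= c <= N.+1%:Z -> -1 <= (c%:~R / N.+1%:R : R) <= 1.
  exact: grid_point_bound.
have -> : P (slab N j) = P (lower_event N.+1%:R^-1 j.+1) +
                         P (lower_event N.+1%:R^-1 (- j.+1%:Z)).
  rewrite measureU //; try exact: measurable_lower_event.
  apply/seteqP; split => t // [Ei Ej].
  by have := cell_inj delta_gt0 Ei.1 Ej.1; lia.
rewrite !probability_lower_event ?invr_ge0 //.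
- by rewrite -EFinD mulrNz pmulrn mulNr mulrDr.
- by have /andP[] := grid (- j.+1%:Z) ltac:(lia).
- by have /andP[] := grid (- j.+1%:Z + 1) ltac:(lia).
- by have /andP[] := grid j.+1 ltac:(lia).
- by have /andP[] := grid (j.+1 + 1) ltac:(lia).
Qed.

Lemma probability_slab_ge N j : (j < N)%N ->
  ((N.+1%:R^-1 * cdf_max 0)%:E <= P (slab N j))%E.
Proof.
move=> jN; rewrite probability_slab // lee_fin -mulrA ler_pM2l ?invr_gt0 ?ltr0Sn //.
by have := @cdf_max_addN (j.+1%:R / N.+1%:R); rewrite divr_ge0 //; lra.
Qed.

Lemma measurable_X_ge_maxZ : measurable X_ge_maxZ.
Proof.
rewrite (_ : X_ge_maxZ = \bigcap_(i in [set i | (2 <= i <= k)%N]) [set t | Z i t <= X t]).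
  apply: bigcap_measurableType => i hi.
  by have := measurable_fun_le measurableT (mZ hi) mX; rewrite setTI.
by apply/seteqP; split => t /= H i hi; apply: H.
Qed.

Lemma cdf_max0_approx N : cdf_max 0 - cdf_max 0 / N.+1%:R <= fine (P X_ge_maxZ).
Proof.
rewrite -lee_fin probability_fineK; last exact: measurable_X_ge_maxZ.
have -> : cdf_max 0 - cdf_max 0 / N.+1%:R = N%:R * (N.+1%:R^-1 * cdf_max 0).
  by rewrite -natr1; field; rewrite natr1 pnatr_eq0.
apply: (@le_trans _ _ (P (\big[setU/set0]_(j < N) slab N j))); last first.
  apply: le_measure; rewrite ?inE; last 2 first.
  - exact: measurable_X_ge_maxZ.
  - by move=> t; rewrite -bigcup_mkord => -[j _ /slab_sub].
  by apply: bigsetU_measurable => j _; exact: measurable_slab.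
rewrite measure_semi_additive_ord //; last 3 first.
- by move=> j; exact: measurable_slab.
- by move=> i j _ _ [t [Si Sj]]; apply: val_inj; exact: slab_inj Si Sj.
- by apply: bigsetU_measurable => j _; exact: measurable_slab.
rewrite (_ : (_ * _)%:E = \sum_(j < N) (N.+1%:R^-1 * cdf_max 0)%:E).
  by apply: lee_sum => j _; exact: probability_slab_ge.
by rewrite sumEFin sumr_const card_ord mulr_natl.
Qed.

Lemma probability_maxZ_le0 : P (maxZ_le 0) = (cdf_max 0)%:E.
Proof.
have := probability_X_maxZ_le 0 measurableT.
by rewrite preimage_setT setTI probability_setT mul1e.
Qed.

Lemma probability_maxZ_le0_le : (P (maxZ_le 0) <= P X_ge_maxZ)%E.
Proof.
rewrite probability_maxZ_le0 -probability_fineK ?lee_fin; last exact: measurable_X_ge_maxZ.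
exact: ler_of_approx (cdf_max_ge0 0) cdf_max0_approx.
Qed.

End comparison_with_max.

Theorem lemma26 (R : realType) (d : measure_display) (T : measurableType d)
  (P : probability T R) (k : nat) (m : nat -> nat) (Z : nat -> T -> R) (X : T -> R) :
  (2 <= k)%N ->
  (forall i, (2 <= i <= k)%N -> (0 < m i)%N) ->
  measurable_fun setT X ->
  (forall i, (2 <= i <= k)%N -> measurable_fun setT (Z i)) ->
  has_law P X (@unifD R) ->
  (forall i, (2 <= i <= k)%N -> has_law P (Z i) (@Dsum R (m i))) ->
  mutually_independent P (iota 1 k) (fun i => if i == 1%N then X else Z i) ->
  (P [set t | forall i, (2 <= i <= k)%N -> (Z i t <= 0)%R]
   <= P [set t | forall i, (2 <= i <= k)%N -> (Z i t <= X t)%R])%E.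
Proof.
exact: (@probability_maxZ_le0_le d T R P k m Z X).
Qed.
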